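(* Let $r, l, h, l', m, n$ be positive integers and let $$P = \left\{ \left( \left\lfloor \tfrac{y}{h} \right\rfloor l' + t,\; y \right) : t \in \{0,\dots,l-1\},\ y \in \{0,\dots,rh-1\} \right\}$$ be the structured dense polygon with parameters $(r,l,h,l')$. Let $\kappa = \gcd(m,h)$, $m = \tau_m \kappa$, $h = \tau_h \kappa$, and write $\tau_m = \alpha \tau_h + \beta$ with integers $\alpha \ge 0$ and $0 \le \beta < \tau_h$. Assume $\tau_m$ divides $r$. Then the number $\lambda_{naive}$ of thread blocks produced by the Naive Tiling Algorithm on $P$ with $m \times n$ thread blocks is $$\lambda_{naive} = \begin{cases} \dfrac{r}{\tau_m}\left( \tau_h \left\lceil \dfrac{l + (\alpha-1) l'}{n} \right\rceil \right) & \text{if } \beta = 0,\\[2ex] \dfrac{r}{\tau_m}\left( (\beta-1) \left\lceil \dfrac{l + (\alpha+1) l'}{n} \right\rceil + (\tau_h - \beta + 1)\left\lceil \dfrac{l + \alpha l'}{n} \right\rceil \right) & \text{if } \beta \neq 0. \end{cases}$$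
   Context: Points are pairs $(x,y)$ with $x$ the column index and $y$ the row index. For the structured dense polygon $P$ with parameters $(r,l,h,l')$, the $q$-th slab ($q = 0,\dots,r-1$) is the set of rows $\{qh, \dots, (q+1)h - 1\}$; rows in slab $q$ contain exactly the columns $ql', \dots, ql' + l - 1$. The Naive Tiling Algorithm (with thread blocks of size $m \times n$) partitions the rows $\{0,\dots,rh-1\}$ into consecutive patches of $m$ rows, the $k$-th patch ($k = 1, \dots, rh/m$) being rows $\{(k-1)m, \dots, km-1\}$, and tiles each patch from left to right. If the $k$-th patch intersects (in rows) exactly $t_k \ge 1$ slabs, its width is defined as $w^{(k)} = l + (t_k - 1) l'$, and the algorithm uses $\lceil w^{(k)}/n \rceil$ thread blocks for that patch; thus $\lambda_{naive} = \sum_{k=1}^{rh/m} \lceil w^{(k)}/n \rceil$. *)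

From mathcomp Require Import all_boot.
Set Implicit Arguments. Unset Strict Implicit. Unset Printing Implicit Defensive.

Definition ceildiv (a n : nat) : nat := (a + n - 1) %/ n.

Definition patch_rows (m k : nat) : seq nat := iota ((k - 1) * m) m.

Definition slab_meets_patch (h m k q : nat) : bool :=
  has (fun y => (q * h <= y) && (y < q.+1 * h)) (patch_rows m k).

Definition t_patch (r h m k : nat) : nat :=
  count (slab_meets_patch h m k) (iota 0 r).

Definition patch_width (r l h l' m k : nat) : nat :=
  l + (t_patch r h m k - 1) * l'.

Definition lambda_naive (r l h l' m n : nat) : nat :=
  \sum_(1 <= k < (r * h) %/ m + 1) ceildiv (patch_width r l h l' m k) n.

From mathcomp Require Import all_boot zify.

(* Dividing [m] and [h] by kappa = gcd(m, h) does not change which slabs a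
   patch meets, so the j-th patch (from 0) meets
   1 + floor((j tau_m + tau_m - 1) / tau_h) - floor(j tau_m / tau_h) slabs.
   This count is tau_h-periodic in j, hence lambda_naive is r / tau_m times
   its sum over one period.  With tau_m = alpha tau_h + beta and beta > 0 the
   count is alpha + 1 + floor((j tau_m mod tau_h + beta - 1) / tau_h); as
   tau_m is coprime to tau_h, j tau_m mod tau_h runs through all residues
   over a period, so beta - 1 patches meet alpha + 2 slabs and the other
   tau_h - beta + 1 meet alpha + 1.  If beta = 0, coprimality forces
   tau_h = 1 and every patch meets alpha slabs. *)

Lemma count_iota_between (A B r : nat) :
  count (fun q => A <= q <= B) (iota 0 r) = minn r B.+1 - minn r A.
Proof.
elim: r => [|r IHr]; first by rewrite /= !min0n.
by rewrite -addn1 iotaD count_cat IHr /=; case: (leqP A r); case: (leqP r B); lia.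
Qed.

Lemma has_iota_in_slab (h s len q : nat) : 0 < h -> 0 < len ->
  has (fun y => q * h <= y < q.+1 * h) (iota s len) = (s %/ h <= q <= (s + len).-1 %/ h).
Proof.
move=> h_gt0 len_gt0; apply/hasP/andP.
- move=> [y]; rewrite mem_iota => /andP[sy ylt] /andP[qy yq].
  have -> : q = y %/ h.
    by apply/eqP; rewrite eqn_leq leq_divRL // qy -ltnS ltn_divLR // mulSn addnC.
  by split; apply: leq_div2r; lia.
- rewrite leq_divRL // => -[sq qs]; exists (maxn s (q * h)).
    by rewrite mem_iota; lia.
  have : s < q.+1 * h by rewrite -ltn_divLR // ltnS.
  by rewrite mulSn; lia.
Qed.

Definition slab_span (h s len : nat) : nat := (s + len).-1 %/ h - s %/ h.

Lemma t_patch_succE (r h m j : nat) : 0 < h -> 0 < m -> j.+1 * m <= r * h ->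
  t_patch r h m j.+1 = (slab_span h (j * m) m).+1.
Proof.
move=> h_gt0 m_gt0 jm_le.
rewrite /t_patch /slab_meets_patch /patch_rows subn1 /=.
rewrite (eq_count (fun q => has_iota_in_slab _ _ _ q h_gt0 m_gt0)).
rewrite count_iota_between /slab_span.
have : (j * m) %/ h <= (j * m + m).-1 %/ h by apply: leq_div2r; lia.
have : (j * m + m).-1 %/ h < r by rewrite ltn_divLR //; lia.
lia.
Qed.

Lemma lambda_naiveE (r l h l' m n : nat) : 0 < h -> 0 < m ->
  lambda_naive r l h l' m n =
  \sum_(0 <= j < r * h %/ m) ceildiv (l + slab_span h (j * m) m * l') n.
Proof.
move=> h_gt0 m_gt0; rewrite /lambda_naive addn1 big_add1 /=.
apply: eq_big_nat => j /andP[_ j_lt].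
rewrite /patch_width t_patch_succE ?subn1 // -leq_divRL //.
Qed.

Lemma divn_pred_mul2r (a b k : nat) : 0 < k -> 0 < a -> (a * k).-1 %/ (b * k) = a.-1 %/ b.
Proof.
move=> k_gt0 a_gt0.
have -> : (a * k).-1 = a.-1 * k + k.-1 by rewrite -(prednK a_gt0) mulSn; lia.
by rewrite (mulnC b) divnMA divnMDl // (divn_small (m := k.-1)) ?addn0 // ltn_predL.
Qed.

Lemma slab_span_mul2r (h s len k : nat) : 0 < k -> 0 < len ->
  slab_span (h * k) (s * k) (len * k) = slab_span h s len.
Proof.
move=> k_gt0 len_gt0.
by rewrite /slab_span -mulnDl divn_pred_mul2r ?divnMr //; lia.
Qed.

Lemma slab_span_shift (h s len c : nat) : 0 < h -> 0 < len ->
  slab_span h (c * h + s) len = slab_span h s len.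
Proof.
move=> h_gt0 len_gt0; rewrite /slab_span -addnA.
have -> : (c * h + (s + len)).-1 = c * h + (s + len).-1 by lia.
by rewrite !divnMDl // subnDl.
Qed.

Lemma slab_spanE (h s a b : nat) : 0 < h -> 0 < b ->
  slab_span h s (a * h + b) = a + (s %% h + b).-1 %/ h.
Proof.
move=> h_gt0 b_gt0; rewrite /slab_span {1}(divn_eq s h).
have -> : (s %/ h * h + s %% h + (a * h + b)).-1 = (s %/ h + a) * h + (s %% h + b).-1 by lia.
by rewrite divnMDl // -addnA addKn.
Qed.

Lemma big_nat_periodic (G : nat -> nat) (p c : nat) : (forall j, G (j + p) = G j) ->
  \sum_(0 <= j < c * p) G j = c * \sum_(0 <= j < p) G j.
Proof.
move=> G_per; elim: c => [|c IHc]; first by rewrite !mul0n big_geq.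
rewrite !mulSn (@big_cat_nat _ _ _ p) ?leq_addr //= -IHc; congr (_ + _).
by rewrite -{1}(add0n p) big_addn addKn; under eq_bigr do rewrite G_per.
Qed.

Lemma mulmod_coprime_inj (a d i j : nat) : coprime a d -> i < d -> j < d ->
  i * a = j * a %[mod d] -> i = j.
Proof.
move=> co_ad; wlog ij : i j / i <= j => [W id jd eq_mod|id jd /eqP].
  by case: (leqP i j) => [|/ltnW] ij; [apply: W | apply/esym/W].
rewrite eq_sym eqn_mod_dvd ?leq_mul2r ?ij ?orbT // -mulnBl Gauss_dvdl 1?coprime_sym //.
by case: (posnP (j - i)) => [|ji_gt0 /(dvdn_leq ji_gt0)]; lia.
Qed.

Lemma big_nat_mulmod_coprime (H : nat -> nat) (a d : nat) : 0 < d -> coprime a d ->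
  \sum_(0 <= j < d) H (j * a %% d) = \sum_(0 <= u < d) H u.
Proof.
move=> d_gt0 co_ad; rewrite !big_mkord.
pose f (j : 'I_d) : 'I_d := Ordinal (ltn_pmod (j * a) d_gt0).
have f_inj : injective f.
  by move=> i j /(congr1 val) /= /mulmod_coprime_inj ij; apply/val_inj/ij.
by rewrite [RHS](reindex_inj f_inj).
Qed.

Lemma sum_div_shift (F : nat -> nat) (a b d : nat) : 0 < b -> b <= d ->
  \sum_(0 <= u < d) F (a + (u + b).-1 %/ d) = (b - 1) * F (a + 1) + (d - b + 1) * F a.
Proof.
move=> b_gt0 b_le; rewrite (@big_cat_nat _ _ _ (d - b + 1)) //=; last by lia.
rewrite (@eq_big_nat _ _ _ 0 _ _ (fun=> F a)); last first.
  by move=> u /andP[_ u_lt]; rewrite divn_small ?addn0 //; lia.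
rewrite (@eq_big_nat _ _ _ (d - b + 1) _ _ (fun=> F (a + 1))); last first.
  move=> u /andP[u_ge u_lt]; have -> : (u + b).-1 = 1 * d + ((u + b).-1 - d) by lia.
  by rewrite divnMDl ?divn_small ?addn0 //; lia.
by rewrite !sum_nat_const_nat addnC; congr (_ * _ + _); lia.
Qed.

Lemma coprime_cofactors (a b k : nat) : 0 < k -> gcdn (a * k) (b * k) = k -> coprime a b.
Proof.
by move=> k_gt0; rewrite -muln_gcdl -{2}(mul1n k) => /eqP; rewrite eqn_pmul2r.
Qed.

Lemma sum_slab_span_period (F : nat -> nat) (a b tm th : nat) : 0 < b -> b < th ->
  tm = a * th + b -> coprime tm th ->
  \sum_(0 <= j < th) F (slab_span th (j * tm) tm) = (b - 1) * F (a + 1) + (th - b + 1) * F a.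
Proof.
move=> b_gt0 b_lt def_tm co_tm_th; have th_gt0 : 0 < th by lia.
under eq_big_nat => j _ do rewrite {2}def_tm slab_spanE //.
rewrite (big_nat_mulmod_coprime (fun u => F (a + (u + b).-1 %/ th))) //.
by rewrite sum_div_shift // ltnW.
Qed.

Lemma sum_slab_span_period_dvd (F : nat -> nat) (a tm th : nat) :
  tm = a * th -> coprime tm th -> \sum_(0 <= j < th) F (slab_span th (j * tm) tm) = th * F (a - 1).
Proof.
move=> def_tm co_tm_th.
have th1 : th = 1 by move: co_tm_th; rewrite def_tm coprimeMl /coprime gcdnn => /andP[_ /eqP].
by rewrite th1 big_nat1 /slab_span !divn1 def_tm th1 muln1 mul1n subn0 subn1.
Qed.

Theorem theorem8 (r l h l' m n kappa tau_m tau_h alpha beta : nat) :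
  0 < r -> 0 < l -> 0 < h -> 0 < l' -> 0 < m -> 0 < n ->
  kappa = gcdn m h -> m = tau_m * kappa -> h = tau_h * kappa ->
  tau_m = alpha * tau_h + beta -> beta < tau_h ->
  tau_m %| r ->
  lambda_naive r l h l' m n =
    if beta == 0 then
      (r %/ tau_m) * (tau_h * ceildiv (l + (alpha - 1) * l') n)
    else
      (r %/ tau_m) * ((beta - 1) * ceildiv (l + (alpha + 1) * l') n
                      + (tau_h - beta + 1) * ceildiv (l + alpha * l') n).
Proof.
move=> _ _ h_gt0 _ m_gt0 _ def_kappa def_m def_h def_tau_m beta_lt tau_m_dvd_r.
have kappa_gt0 : 0 < kappa by rewrite def_kappa gcdn_gt0 m_gt0.
have tau_m_gt0 : 0 < tau_m by move: m_gt0; rewrite def_m muln_gt0 => /andP[].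
have co_tau : coprime tau_m tau_h.
  by apply: (@coprime_cofactors _ _ kappa kappa_gt0); rewrite -def_m -def_h def_kappa.
pose F x := ceildiv (l + x * l') n.
have num_patches : r * h %/ m = r %/ tau_m * tau_h.
  by rewrite def_m def_h mulnA divnMr // divn_mulAC.
rewrite lambda_naiveE // num_patches.
rewrite def_m def_h; under eq_big_nat => j _ do rewrite mulnA slab_span_mul2r //.
rewrite (big_nat_periodic (fun j => F (slab_span tau_h (j * tau_m) tau_m))); last first.
  by move=> j; rewrite mulnDl addnC (mulnC tau_h) slab_span_shift //; lia.
case: eqP => [beta0 | /eqP beta_neq0].
- by rewrite (sum_slab_span_period_dvd F alpha) // def_tau_m beta0 addn0.
- by rewrite (sum_slab_span_period F alpha beta) ?lt0n.
Qed.
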